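(* Let $G$ be a finite simple graph. Then the independence attractor $\mathcal{A}(G)$ of $G$ is not a circle.
   Context: For a finite simple graph $G$, an independent set is a set of pairwise non-adjacent vertices. The independence polynomial is $I_G(z)=\sum_{i=0}^{\alpha} a_i z^i$, where $a_i$ is the number of independent sets of cardinality $i$ (so $a_0=1$) and $\alpha$ (the independence number) is the largest cardinality of an independent set. The lexicographic product $G[H]$ has vertex set $V(G)\times V(H)$, with $(u,v)\sim(u',v')$ iff $u\sim u'$ in $G$, or $u=u'$ and $v\sim v'$ in $H$. Let $G^1=G$ and $G^{m}=G[G^{m-1}]$ denote the $m$-fold lexicographic product of $G$ with itself. The independence attractor is $\mathcal{A}(G)=\lim_{m\to\infty}\{z\in\mathbb{C}: I_{G^m}(z)=0\}$, the limit taken in the Hausdorff metric on nonempty compact subsets of $\mathbb{C}$. (Equivalently, with $P_G=I_G-1$, $\mathcal{A}(G)=\lim_{m\to\infty}\{z: P_G^m(z)=-1\}$, where $P_G^m$ is the $m$-th iterate.) *)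

From HB Require Import structures.
From mathcomp Require Import all_boot all_order all_algebra.
From mathcomp Require Import complex.
From mathcomp Require Import reals.

Set Implicit Arguments.
Unset Strict Implicit.
Unset Printing Implicit Defensive.

Import Order.TTheory GRing.Theory Num.Theory.
Local Open Scope ring_scope.

Definition simple_graph (T : finType) (e : rel T) : Prop :=
  symmetric e /\ irreflexive e.

Definition independent (T : finType) (e : rel T) (S : {set T}) : bool :=
  [forall x in S, forall y in S, ~~ e x y].

Definition indep_poly_eval (T : finType) (e : rel T) (F : comNzRingType) (z : F) : F :=
  \sum_(S : {set T} | independent e S) z ^+ #|S|.

(* Adjacency of the m-fold lexicographic power G^m on vertex sequences
   (x_1, ..., x_m): G^m = G[G^(m-1)], i.e. (u,v) ~ (u',v') iff u ~ u' in G,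
   or u = u' and v ~ v' in G^(m-1). *)
Fixpoint lex_adj (T : eqType) (e : rel T) (x y : seq T) : bool :=
  match x, y with
  | a :: x', b :: y' => e a b || ((a == b) && lex_adj e x' y')
  | _, _ => false
  end.

Definition lex_pow_rel (T : finType) (e : rel T) (m : nat) : rel (m.-tuple T) :=
  fun x y => lex_adj e (tval x) (tval y).

Definition lex_pow_roots (R : realType) (T : finType) (e : rel T) (m : nat)
    (z : R[i]) : Prop :=
  indep_poly_eval (@lex_pow_rel T e m) z = 0.

Definition hausdorff_converges (R : realType) (A : nat -> R[i] -> Prop)
    (L : R[i] -> Prop) : Prop :=
  forall eps : R, 0 < eps -> exists N : nat, forall m : nat, (N <= m)%N ->
    (forall z, A m z -> exists2 w, L w & `|z - w| < (eps%:C)%C) /\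
    (forall w, L w -> exists2 z, A m z & `|z - w| < (eps%:C)%C).

Definition circle (R : realType) (c : R[i]) (r : R) : R[i] -> Prop :=
  fun z => `|z - c| = (r%:C)%C.

(* Write P = I_G - 1. An independent set of G[H] is a family of nonempty
   independent sets of H indexed by an independent set of G, so
   I_{G[H]} = I_G o (I_H - 1); hence I_{G^m} = 1 + P^m, and P maps the zeros
   of I_{G^(m+1)} to zeros of I_{G^m}. If these zero sets converged to a
   circle |z - c| = r, continuity of P would make P map the circle into
   itself. Rescaled to the unit circle, such a polynomial q satisfies
   q(u) * conj(q(u)) = 1 there, which forces q to divide a power of z; so
   P = c + b (z - c)^k. Comparing with P(0) = 0 and P'(0) = |V(G)| shows that
   P has a nonzero coefficient in degree |V(G)| unless |V(G)| <= 1, so V(G) is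
   independent. Then I_{G^m}(z) = 1 + P^m(z) vanishes only at z = -1, and
   subsets of a single point cannot converge to a circle. *)

From HB Require Import structures.
From mathcomp Require Import all_boot all_order all_algebra.
From mathcomp Require Import complex.
From mathcomp Require Import reals.
From mathcomp Require Import ring.
Import Order.TTheory GRing.Theory Num.Theory.
Local Open Scope ring_scope.

Set Implicit Arguments.
Unset Strict Implicit.
Unset Printing Implicit Defensive.

Lemma independentP (T : finType) (e : rel T) (S : {set T}) :
  reflect {in S &, forall x y, ~~ e x y} (independent e S).
Proof.
apply: (iffP forallP) => [indS x y xS yS | indS x].
  by move/implyP/(_ xS)/forallP/(_ y)/implyP: (indS x); apply.
by apply/implyP => xS; apply/forallP => y; apply/implyP; apply: indS.
Qed.

Lemma independent0 (T : finType) (e : rel T) : independent e set0.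
Proof. by apply/independentP => x y; rewrite inE. Qed.

Lemma indep_poly_eval_iso (F : comNzRingType) (A B : finType) (r : rel A) (s : rel B)
    (phi : A -> B) (z : F) :
  bijective phi -> {mono phi : x y / r x y >-> s x y} ->
  indep_poly_eval s z = indep_poly_eval r z.
Proof.
move=> [psi phiK psiK] phi_mono; have phi_inj := can_inj phiK.
have imset_bij : {on [pred S | independent s S],
                   bijective (fun S : {set A} => phi @: S)}.
  exists (fun S : {set B} => psi @: S) => S _.
    by rewrite -imset_comp (eq_imset _ phiK) imset_id.
  by rewrite -imset_comp (eq_imset _ psiK) imset_id.
rewrite /indep_poly_eval (reindex _ imset_bij) /=.
apply: eq_big => S; last by rewrite card_imset.
apply/independentP/independentP => indS x y.
  by move=> xS yS; rewrite -phi_mono; apply: indS; apply: imset_f.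
by move=> /imsetP [x' x'S ->] /imsetP [y' y'S ->]; rewrite phi_mono; apply: indS.
Qed.

Lemma indep_poly_eval_sub1 (T : finType) (e : rel T) (F : comNzRingType) (z : F) :
  indep_poly_eval e z - 1 = \sum_(S | independent e S && (S != set0)) z ^+ #|S|.
Proof.
rewrite /indep_poly_eval (bigD1 set0) ?independent0 //= cards0 expr0 addrC addrK.
by apply: eq_bigl => S; rewrite andbC.
Qed.

Section LexicographicProduct.
Variables (T U : finType) (e : rel T) (f : rel U).

Definition lex_rel : rel (T * U) :=
  fun p q => e p.1 q.1 || ((p.1 == q.1) && f p.2 q.2).

Definition set_of_fibers (g : {ffun T -> {set U}}) : {set T * U} :=
  [set p | p.2 \in g p.1].

Definition fibers (S : {set T * U}) : {ffun T -> {set U}} :=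
  [ffun a => [set x | (a, x) \in S]].

Definition fiber_support (g : {ffun T -> {set U}}) : {set T} :=
  [set a | g a != set0].

Lemma set_of_fibersK : cancel set_of_fibers fibers.
Proof. by move=> g; apply/ffunP => a; apply/setP => x; rewrite ffunE !inE. Qed.

Lemma fibersK : cancel fibers set_of_fibers.
Proof. by move=> S; apply/setP => -[a x]; rewrite !inE ffunE inE. Qed.

Lemma card_set_of_fibers g : #|set_of_fibers g| = (\sum_a #|g a|)%N.
Proof.
rewrite -sum1_card.
rewrite (eq_bigl (fun p : T * U => predT p.1 && (p.2 \in g p.1))) => [|[a x]];
  last by rewrite !inE.
rewrite -(pair_big_dep predT (fun a x => x \in g a) (fun _ _ => 1%N)) /=.
by apply: eq_bigr => a _; rewrite sum1_card.
Qed.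

Lemma independent_set_of_fibers g :
  independent lex_rel (set_of_fibers g) =
  independent e (fiber_support g) && [forall a, independent f (g a)].
Proof.
apply/independentP/andP => [indS | [/independentP indX /forallP indg]].
  split.
    apply/independentP => a b; rewrite !inE => /set0Pn [x xa] /set0Pn [y yb].
    have := indS (a, x) (b, y); rewrite !inE /= => /(_ xa yb).
    by rewrite /lex_rel /= negb_or => /andP [].
  apply/forallP => a; apply/independentP => x y xa ya.
  have := indS (a, x) (a, y); rewrite !inE /= => /(_ xa ya).
  by rewrite /lex_rel /= eqxx /= negb_or => /andP [].
move=> [a x] [b y]; rewrite !inE /= => xa yb.
have suppa : a \in fiber_support g by rewrite inE; apply/set0Pn; exists x.
have suppb : b \in fiber_support g by rewrite inE; apply/set0Pn; exists y.
rewrite /lex_rel /= negb_or indX //=; apply/negP => /andP [/eqP eab fxy].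
by move: yb fxy; rewrite -eab => yb; move/independentP: (indg a) => /(_ x y xa yb) /negP.
Qed.

Lemma set_of_fibers_in_family (X : {set T}) g : independent e X ->
  (independent lex_rel (set_of_fibers g) && (fiber_support g == X)) =
  (g \in pfamily set0 X (fun _ S => independent f S && (S != set0))).
Proof.
move=> indX; apply/andP/pfamilyP => [[] | [/supportP gX0 gX]].
  rewrite independent_set_of_fibers => /andP [_ /forallP indg] /eqP <-.
  split; first by apply/supportP => a; rewrite inE negbK => /eqP.
  by move=> a; rewrite inE => ga0; rewrite unfold_in indg.
have suppX : fiber_support g = X.
  apply/setP => a; rewrite inE; have [aX | aX] := boolP (a \in X).
    by move: (gX a aX); rewrite unfold_in => /andP [].
  by rewrite gX0 // eqxx.
rewrite independent_set_of_fibers suppX indX eqxx; split=> //.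
apply/forallP => a; have [aX | aX] := boolP (a \in X).
  by move: (gX a aX); rewrite unfold_in => /andP [].
by rewrite gX0 // independent0.
Qed.

Lemma exp_card_set_of_fibers (F : comNzRingType) (z : F) g :
  z ^+ #|set_of_fibers g| = \prod_(a in fiber_support g) z ^+ #|g a|.
Proof.
rewrite card_set_of_fibers (big_morph _ (exprD z) (expr0 z)).
rewrite (bigID (mem (fiber_support g))) /= [X in _ * X]big1 ?mulr1 // => a.
by rewrite inE negbK => /eqP ->; rewrite cards0.
Qed.

Lemma indep_poly_eval_lex (F : comNzRingType) (z : F) :
  indep_poly_eval lex_rel z = indep_poly_eval e (indep_poly_eval f z - 1).
Proof.
have fibers_bij : {on [pred S | independent lex_rel S], bijective set_of_fibers}.
  by exists fibers => S _; [apply: set_of_fibersK | apply: fibersK].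
rewrite /indep_poly_eval (reindex _ fibers_bij) /=.
rewrite (partition_big fiber_support (independent e)) => [|g];
  last by rewrite independent_set_of_fibers => /andP [].
apply: eq_bigr => X indX; rewrite -/(indep_poly_eval f z) indep_poly_eval_sub1.
rewrite -prodr_const (big_distr_big_dep set0) /=.
apply: eq_big => g; first exact: set_of_fibers_in_family.
by move=> /andP [_ /eqP <-]; rewrite exp_card_set_of_fibers.
Qed.
End LexicographicProduct.

Lemma indep_poly_eval_edgeless (T : finType) (e : rel T) (F : comNzRingType) (z : F) :
  (forall x y, ~~ e x y) -> indep_poly_eval e z = (1 + z) ^+ #|T|.
Proof.
move=> edgeless; rewrite /indep_poly_eval (eq_bigl predT) => [|S];
  last by apply/independentP => x y _ _; apply: edgeless.
rewrite addrC -prodr_const (bigA_distr _ _ (fun=> z) (fun=> 1)).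
by apply: eq_bigr => S _; rewrite -big_mkcond prodr_const.
Qed.

Section LexicographicPower.
Variables (T : finType) (e : rel T) (F : comNzRingType).

Lemma indep_poly_eval_lex_pow0 (z : F) : indep_poly_eval (@lex_pow_rel T e 0) z = 1 + z.
Proof.
rewrite indep_poly_eval_edgeless => [|x y]; last by rewrite (tuple0 x) (tuple0 y).
by have := card_tuple 0 T; rewrite expn0 => ->.
Qed.

Lemma indep_poly_eval_lex_powS m (z : F) :
  indep_poly_eval (@lex_pow_rel T e m.+1) z =
  indep_poly_eval e (indep_poly_eval (@lex_pow_rel T e m) z - 1).
Proof.
rewrite -indep_poly_eval_lex.
apply: (indep_poly_eval_iso (phi := fun p : T * m.-tuple T => [tuple of p.1 :: p.2])) => //.
exists (fun t : m.+1.-tuple T => (thead t, [tuple of behead t])) => [[a t]|t] /=.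
  by congr pair; apply: val_inj.
by rewrite [RHS]tuple_eta.
Qed.

Lemma indep_poly_eval_lex_pow m (z : F) :
  indep_poly_eval (@lex_pow_rel T e m) z = 1 + iter m (fun y => indep_poly_eval e y - 1) z.
Proof.
elim: m => [|m IHm]; first exact: indep_poly_eval_lex_pow0.
by rewrite indep_poly_eval_lex_powS IHm addrC addKr iterS [RHS]addrC subrK.
Qed.
End LexicographicPower.

Section IndepPoly.
Variables (T : finType) (e : rel T) (F : comNzRingType).

Definition indep_poly : {poly F} := \sum_(S : {set T} | independent e S) 'X^#|S|.

Lemma horner_indep_poly (z : F) : indep_poly.[z] = indep_poly_eval e z.
Proof. by rewrite horner_sum; apply: eq_bigr => S _; rewrite hornerXn. Qed.

Lemma coef_indep_poly k :
  indep_poly`_k = #|[set S : {set T} | independent e S & #|S| == k]|%:R.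
Proof.
rewrite coef_sum -sum1dep_card natr_sum big_mkcondr /=.
by apply: eq_bigr => S _; rewrite coefXn eq_sym; case: (_ == _).
Qed.

Lemma coef0_indep_poly : indep_poly`_0 = 1.
Proof.
rewrite coef_indep_poly (_ : [set S | _ & _] = [set set0]) ?cards1 //.
by apply/setP => S; rewrite !inE cards_eq0 andb_idl // => /eqP ->; apply: independent0.
Qed.

Lemma coef1_indep_poly : irreflexive e -> indep_poly`_1 = #|T|%:R.
Proof.
move=> e_irr; rewrite coef_indep_poly (_ : [set S | _ & _] = [set [set x] | x : T]).
  by rewrite card_imset //; apply: set1_inj.
apply/setP => S; rewrite !inE; apply/andP/imsetP => [[_ /cards1P [x ->]] | [x _ ->]].
  by exists x.
split; last by rewrite cards1.
by apply/independentP => y z; rewrite !inE => /eqP -> /eqP ->; rewrite e_irr.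
Qed.

Lemma coef_card_indep_poly : indep_poly`_#|T| = (independent e [set: T])%:R.
Proof.
have cardT (S : {set T}) : (#|S| == #|T|) = (S == setT).
  by rewrite eqEcard subsetT cardsT eqn_leq max_card.
rewrite coef_indep_poly; case: (boolP (independent e _)) => indT.
  rewrite (_ : [set S | _ & _] = [set setT]) ?cards1 //.
  by apply/setP => S; rewrite !inE cardT andb_idl // => /eqP ->.
rewrite (_ : [set S | _ & _] = set0) ?cards0 //.
apply/setP => S; rewrite !inE cardT; apply/andP => -[indS /eqP ST].
by rewrite -ST indS in indT.
Qed.

Lemma independent_setT_of_coef_card : (indep_poly - 1)`_#|T| != 0 -> independent e [set: T].
Proof.
rewrite coefB coef1 coef_card_indep_poly; case: (boolP (independent e _)) => // indT.
have [T0 _ | _] := eqVneq #|T| 0%N; last by rewrite subrr eqxx.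
move: indT; rewrite (_ : [set: T] = set0) ?independent0 //.
by apply/eqP; rewrite -cards_eq0 cardsT T0.
Qed.
End IndepPoly.

Lemma independent_setT_card_le1 (T : finType) (e : rel T) :
  irreflexive e -> (#|T| <= 1)%N -> independent e [set: T].
Proof.
by move=> e_irr /fintype_le1P T1; apply/independentP => x y _ _; rewrite (T1 x y) e_irr.
Qed.

Section UnitCircle.
Variable C : numClosedFieldType.

Definition cayley (t : nat) : C := (t%:R + 'i) / (t%:R - 'i).

Lemma natr_subCi_neq0 (t : nat) : t%:R - 'i != 0 :> C.
Proof.
rewrite subr_eq0; apply: contraNneq (nonRealCi C) => <-.
exact: realn.
Qed.

Lemma norm_cayley t : `|cayley t| = 1.
Proof.
rewrite /cayley; have -> : t%:R + 'i = (t%:R - 'i)^* :> C.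
  by rewrite rmorphB /= conjC_nat conjCi opprK.
by rewrite normf_div norm_conjC divff // normr_eq0 natr_subCi_neq0.
Qed.

Lemma cayley_inj : injective cayley.
Proof.
move=> s t /eqP; rewrite eqr_div ?natr_subCi_neq0 // => /eqP st.
have : 'i *+ 2 * (t%:R - s%:R) = 0 :> C.
  transitivity ((s%:R + 'i) * (t%:R - 'i) - (t%:R + 'i) * (s%:R - 'i) : C).
    by ring.
  by rewrite st subrr.
move/eqP; rewrite mulf_eq0 mulrn_eq0 (negbTE (neq0Ci C)) subr_eq0 eqr_nat.
by move/eqP.
Qed.

Lemma poly_unit_circle_eq0 (p : {poly C}) :
  (forall u, `|u| = 1 -> p.[u] = 0) -> p = 0.
Proof.
move=> p0; apply: (@roots_geq_poly_eq0 _ _ [seq cayley t | t <- iota 0 (size p)]).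
- by apply/allP => _ /mapP [t _ ->]; apply/eqP/p0/norm_cayley.
- by rewrite map_inj_uniq ?iota_uniq //; apply: cayley_inj.
- by rewrite size_map size_iota.
Qed.

Lemma eq_poly_horner (p q : {poly C}) : (forall z, p.[z] = q.[z]) -> p = q.
Proof.
move=> pq; apply/eqP; rewrite -subr_eq0; apply/eqP/poly_unit_circle_eq0 => u _.
by rewrite hornerD hornerN pq subrr.
Qed.
End UnitCircle.

Section CirclePreservingPolynomials.
Variable C : numClosedFieldType.

(* The reciprocal polynomial 'X^d * q^*(1/'X) of q, where d = (size q).-1. *)
Definition conj_reverse (q : {poly C}) : {poly C} :=
  \sum_(i < size q) (q`_i)^* *: 'X^((size q).-1 - i).

Lemma horner_conj_reverse (q : {poly C}) u : `|u| = 1 ->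
  (conj_reverse q).[u] = u ^+ (size q).-1 * (q.[u])^*.
Proof.
move=> u1; have u_unit : u \is a GRing.unit by rewrite unitfE -normr_eq0 u1 oner_neq0.
have uV : u^* = u^-1 by rewrite invC_norm u1 expr1n invr1 mul1r.
rewrite horner_sum horner_coef rmorph_sum mulr_sumr; apply: eq_bigr => i _.
have le_i_d : (i <= (size q).-1)%N by rewrite -ltnS (ltn_predK (ltn_ord i)).
by rewrite hornerZ hornerXn rmorphM rmorphXn /= uV exprVn exprB // mulrCA.
Qed.

Lemma unit_circle_invariant_monomial (q : {poly C}) :
  (forall u, `|u| = 1 -> `|q.[u]| = 1) -> exists b k, `|b| = 1 /\ q = b *: 'X^k.
Proof.
move=> q1.
(* |q| = 1 on the unit circle, so q * conj_reverse q and 'X^d agree there. *)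
have q_dvd_Xn : q %| ('X - 0%:P) ^+ (size q).-1.
  rewrite subr0; apply/dvdpP; exists (conj_reverse q); rewrite mulrC.
  apply/eqP; rewrite eq_sym -subr_eq0; apply/eqP/poly_unit_circle_eq0 => u u1.
  rewrite hornerD hornerN hornerM horner_conj_reverse // hornerXn mulrCA -normCK.
  by rewrite q1 // expr1n mulr1 subrr.
have [k _] := dvdp_exp_XsubCP q_dvd_Xn; rewrite subr0 => /eqpfP.
rewrite lead_coefXn divr1 => qE; exists (lead_coef q), k; split=> //.
by have := q1 1 (normr1 _); rewrite {1}qE hornerZ hornerXn expr1n mulr1.
Qed.

Lemma circle_invariant_shifted_power (p : {poly C}) (c rho : C) : 0 < rho ->
  (forall w, `|w - c| = rho -> `|p.[w] - c| = rho) ->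
  exists b k, `|b| * rho ^+ k = rho /\ p = c%:P + b *: ('X - c%:P) ^+ k.
Proof.
move=> rho_gt0 p_circle; have rho_neq0 : rho != 0 by rewrite gt_eqF.
pose q := rho^-1 *: (p \Po (c%:P + rho *: 'X) - c%:P).
have qE u : q.[u] = rho^-1 * (p.[c + rho * u] - c).
  by rewrite !hornerE horner_comp !hornerE.
have [|b [k [b1 qbXk]]] := @unit_circle_invariant_monomial q.
  move=> u u1; rewrite qE normrM p_circle; last first.
    by rewrite addrC addKr normrM u1 mulr1 gtr0_norm.
  by rewrite normfV gtr0_norm // mulVf.
exists (rho * b / rho ^+ k), k; split.
  by rewrite normf_div normrM normrX gtr0_norm // b1 mulr1 divfK // expf_neq0.
apply: eq_poly_horner => z.
have -> : p.[z] = c + rho * q.[(z - c) / rho].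
  by rewrite qE mulVKf // mulrC divfK // addrC subrK addrC subrK.
rewrite qbXk hornerZ hornerXn hornerD hornerC hornerZ horner_exp hornerXsubC.
by rewrite expr_div_n !mulrA [in RHS]mulrAC.
Qed.
End CirclePreservingPolynomials.

Section ShiftedPowers.
Variable F : numDomainType.

Lemma coef0_exp_XsubC (c : F) k : (('X - c%:P) ^+ k)`_0 = (- c) ^+ k.
Proof. by rewrite -horner_coef0 horner_exp hornerXsubC sub0r. Qed.

Lemma coef1_exp_XsubC (c : F) k : (('X - c%:P) ^+ k.+1)`_1 = (- c) ^+ k *+ k.+1.
Proof.
have := coef_deriv (('X - c%:P) ^+ k.+1) 0; rewrite mulr1n => <-.
by rewrite deriv_exp derivXsubC mul1r -horner_coef0 hornerMn horner_exp hornerXsubC sub0r.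
Qed.

Lemma coef_top_exp_XsubC (c : F) k : (('X - c%:P) ^+ k)`_k = 1.
Proof.
have := monicP (monic_exp k (monicXsubC c)).
by rewrite lead_coefE size_exp_XsubC.
Qed.

Lemma shifted_power_coef_card (p : {poly F}) (c b : F) (k n : nat) :
  p = c%:P + b *: ('X - c%:P) ^+ k -> b != 0 -> (k = 1 -> `|b| = 1) ->
  p`_0 = 0 -> p`_1 = n%:R -> (n <= 1)%N \/ p`_n != 0.
Proof.
have le1_of_natr_eq0 : 0 = n%:R :> F -> (n <= 1)%N.
  by move/esym/eqP; rewrite pnatr_eq0 => /eqP ->.
move=> -> b_neq0 b1; rewrite !coefD !coefZ !coefC /= add0r.
case: k b1 => [_ _ | k b1]; first by rewrite expr0 coef1 mulr0 => /le1_of_natr_eq0; left.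
rewrite coef0_exp_XsubC coef1_exp_XsubC => p0 p1.
have [c0 | c_neq0] := eqVneq c 0.
  move: b1 p0 p1; rewrite c0 oppr0; case: k => [b1 _ | k _ _]; last first.
    by rewrite expr0n mul0rn mulr0 => /le1_of_natr_eq0; left.
  rewrite expr0 mulr1n mulr1 => bn; left.
  by move: (b1 erefl); rewrite bn normr_nat => /eqP; rewrite pnatr_eq1 => /eqP ->.
right; suff -> : n = k.+1 by rewrite /= add0r coef_top_exp_XsubC mulr1.
have bc : b * (- c) ^+ k.+1 = - c by apply/eqP; rewrite -addr_eq0 addrC p0.
have nc_neq0 : - c != 0 by rewrite oppr_eq0.
apply/eqP; rewrite -(eqr_nat F) -(inj_eq (mulfI nc_neq0)) -p1.
by rewrite mulrCA mulrnAr -exprS mulrnAr bc mulr_natr.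
Qed.
End ShiftedPowers.

Lemma horner_lipschitz (F : numDomainType) (p : {poly F}) (w : F) :
  exists2 K, 0 <= K & forall z, `|z - w| <= 1 -> `|p.[z] - p.[w]| <= K * `|z - w|.
Proof.
have /factor_theorem [q pE] : root (p - p.[w]%:P) w by rewrite /root !hornerE subrr.
exists (\sum_(i < size q) `|q`_i| * (`|w| + 1) ^+ i) => [|z zw].
  by apply: sumr_ge0 => i _; rewrite mulr_ge0 ?exprn_ge0 ?addr_ge0.
have -> : p.[z] - p.[w] = q.[z] * (z - w).
  by move: (congr1 (horner^~ z) pE); rewrite /= hornerM hornerXsubC !hornerE.
rewrite normrM ler_wpM2r // horner_coef (le_trans (ler_norm_sum _ _ _)) //.
apply: ler_sum => i _; rewrite normrM normrX ler_wpM2l // lerXn2r ?nnegrE ?addr_ge0 //.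
by rewrite -[z](subrK w) (le_trans (ler_normD _ _)) // addrC lerD2l.
Qed.

Section ComplexPlane.
Variable R : realType.
Local Open Scope complex_scope.
Implicit Types (c x : R[i]) (r eps : R) (A : nat -> R[i] -> Prop) (L : R[i] -> Prop).

Lemma norm_lt_real_eq0 x : (forall eps, 0 < eps -> `|x| < eps%:C) -> x = 0.
Proof.
move=> x_small; set a := complex.Re `|x|.
have nxE : `|x| = a%:C by rewrite RRe_real ?normr_real.
have a_ge0 : 0 <= a by rewrite -ler0c -nxE.
have [a_gt0 | a_le0] := ltrP 0 a; first by have := x_small a a_gt0; rewrite nxE ltxx.
have a0 : a = 0 by apply/eqP; rewrite eq_le a_le0 a_ge0.
by apply/normr0_eq0; rewrite nxE a0.
Qed.

Lemma circle_closed c r x :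
  (forall eps, 0 < eps -> exists2 w, circle c r w & `|x - w| < eps%:C) -> circle c r x.
Proof.
move=> x_near; apply/eqP; rewrite -subr_eq0; apply/eqP/norm_lt_real_eq0 => eps eps_gt0.
have [w cw xw] := x_near eps eps_gt0; rewrite -cw.
apply: le_lt_trans xw; rewrite (le_trans (ler_dist_dist _ _)) //.
by rewrite opprB addrA subrK.
Qed.

Lemma hausdorff_limit_image_in_closure A L (p : {poly R[i]}) :
  hausdorff_converges A L -> (forall m z, A m.+1 z -> A m p.[z]) ->
  forall w, L w -> forall eps, 0 < eps -> exists2 w', L w' & `|p.[w] - w'| < eps%:C.
Proof.
move=> conv A_back w Lw eps eps_gt0.
have [K K_ge0 lipK] := horner_lipschitz p w.
set k := complex.Re K; have KE : K = k%:C by rewrite RRe_real ?ger0_real.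
have k_ge0 : 0 <= k by rewrite -ler0c -KE.
pose d := Num.min 1 (eps / (k + 1)).
have d_gt0 : 0 < d by rewrite lt_min ltr01 divr_gt0 // ltr_wpDl.
have d_le1 : d <= 1 by rewrite ge_min lexx.
have kd_le : (k + 1) * d <= eps.
  by rewrite mulrC -ler_pdivlMr ?ltr_wpDl // ge_min lexx orbT.
have [N convN] := conv d d_gt0.
have [z Az zw] := (convN N.+1 (leqnSn N)).2 w Lw.
have [w' Lw' pzw'] := (convN N (leqnn N)).1 _ (A_back _ _ Az).
have pwz : `|p.[w] - p.[z]| <= K * d%:C.
  rewrite distrC; apply: le_trans (lipK z _) _; last by rewrite ler_wpM2l // ltW.
  by rewrite (le_trans (ltW zw)) // -[1]/(1%:C) lecR.
exists w' => //; rewrite -[p.[w]](subrK p.[z]) -addrA.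
apply: le_lt_trans (ler_normD _ _) _; apply: lt_le_trans (ler_ltD pwz pzw') _.
by rewrite KE -rmorphM -rmorphD lecR mulrDl mul1r in kd_le *.
Qed.

Lemma hausdorff_circle_not_point A c r a : 0 < r ->
  (forall m z, A m z -> z = a) -> ~ hausdorff_converges A (circle c r).
Proof.
move=> r_gt0 A_a conv; have [N convN] := conv (r / 2) (divr_gt0 r_gt0 (ltr0Sn _ 1)).
have near_a s : `|s| = 1 -> `|a - (c + s * r%:C)| < (r / 2)%:C.
  move=> s1; have [|z /A_a -> //] := (convN N (leqnn N)).2 (c + s * r%:C).
  by rewrite /circle addrAC subrr add0r normrM s1 mul1r ger0_norm // ler0c ltW.
have : `|(c + 1 * r%:C) - (c + -1 * r%:C)| < r%:C.
  apply: le_lt_trans (ler_distD a _ _) _; rewrite distrC [r in _ < r%:C](splitr r) rmorphD.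
  by apply: ltrD; apply: near_a; rewrite ?normrN normr1.
rewrite mul1r mulN1r opprD addrACA subrr add0r opprK -rmorphD.
rewrite ger0_norm ?ler0c ?addr_ge0 ?ltW //.
by rewrite ltcR -[X in _ < X]addr0 ltrD2l ltNge (ltW r_gt0).
Qed.
End ComplexPlane.

Lemma iter_indep_poly_eval_edgeless_eqN1 (T : finType) (e : rel T) (F : idomainType)
    m (z : F) :
  (forall x y, ~~ e x y) -> iter m (fun y => indep_poly_eval e y - 1) z = -1 -> z = -1.
Proof.
move=> edgeless; elim: m z => [//|m IHm] z; rewrite iterSr => /IHm /eqP.
rewrite indep_poly_eval_edgeless // subr_eq addNr expf_eq0 addrC addr_eq0.
by case/andP=> _ /eqP.
Qed.

Lemma lex_pow_rootsE (R : realType) (T : finType) (e : rel T) m (z : R[i]) :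
  lex_pow_roots e m z <-> iter m (fun y => indep_poly_eval e y - 1) z = -1.
Proof.
rewrite /lex_pow_roots indep_poly_eval_lex_pow addrC.
by split=> [/eqP | ->]; [rewrite addr_eq0 => /eqP | rewrite addNr].
Qed.

Unset Implicit Arguments.

Theorem theoremA (R : realType) (T : finType) (e : rel T) :
  simple_graph e ->
  ~ (exists (c : R[i]) (r : R), 0 < r /\
       hausdorff_converges (lex_pow_roots e) (circle c r)).
Proof.
move=> [_ e_irr] [c [r [r_gt0 conv]]].
pose P : {poly R[i]} := indep_poly e _ - 1.
have PE z : P.[z] = indep_poly_eval e z - 1 by rewrite !hornerE horner_indep_poly.
have P_circle w : circle c r w -> circle c r P.[w].
  move=> cw; apply: circle_closed; apply: (hausdorff_limit_image_in_closure conv) cw => m z.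
  by rewrite !lex_pow_rootsE iterSr PE.
have rho_gt0 : 0 < (r%:C)%C by rewrite ltcR.
have [b [k [b_rho P_shape]]] := circle_invariant_shifted_power rho_gt0 P_circle.
have b_neq0 : b != 0.
  by apply: contraTneq rho_gt0 => b0; rewrite -b_rho b0 normr0 mul0r ltxx.
have b1 : k = 1%N -> `|b| = 1.
  by move=> k1; apply: (mulIf (lt0r_neq0 rho_gt0)); rewrite mul1r -{2}b_rho k1 expr1.
have P0 : P`_0 = 0 by rewrite coefB coef0_indep_poly coef1 subrr.
have P1 : P`_1 = #|T|%:R by rewrite coefB coef1_indep_poly // coef1 subr0.
have indT : independent e [set: T].
  have [|] := shifted_power_coef_card P_shape b_neq0 b1 P0 P1.
    exact: independent_setT_card_le1.
  exact: independent_setT_of_coef_card.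
apply: (hausdorff_circle_not_point r_gt0 _ conv) => m z /lex_pow_rootsE.
by apply: iter_indep_poly_eval_edgeless_eqN1 => x y; move/independentP: indT; apply.
Qed.
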